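(* The following single-statistic generating functions hold over $S_n(123,132)$: $$\sum_{n\ge0}\sum_{\pi\in S_n(123,132)}x^np^{\operatorname{asc}(\pi)}=\frac{1-x}{1-2x+x^2-px^2},\qquad \sum_{n\ge0}\sum_{\pi\in S_n(123,132)}x^nq^{\operatorname{des}(\pi)}=\frac{1+x-2qx+x^2-2qx^2+q^2x^2}{1-2qx-qx^2+q^2x^2},$$ $$\sum_{n\ge0}\sum_{\pi\in S_n(123,132)}x^ny^{\operatorname{MNA}(\pi)}=\frac{1-x}{1-2x+x^2-x^2y},\qquad \sum_{n\ge0}\sum_{\pi\in S_n(123,132)}x^nz^{\operatorname{MND}(\pi)}=\frac{1+x+x^2-2x^2z-x^3z}{1-3x^2z-2x^3z}.$$
   Context: For $n\ge 0$, $S_n$ denotes the set of permutations $\pi=\pi_1\pi_2\cdots\pi_n$ of $[n]=\{1,\dots,n\}$ ($S_0$ consists of the empty permutation, for which all statistics below are $0$). $S_n(123,132)$ is the set of $\pi\in S_n$ containing no subsequence order-isomorphic to $123$ or to $132$. $\operatorname{asc}(\pi)$ (resp. $\operatorname{des}(\pi)$) is the number of $i\in[n-1]$ with $\pi_i<\pi_{i+1}$ (resp. $\pi_i>\pi_{i+1}$). $\operatorname{MNA}(\pi)$ is the maximum size of a set $I\subseteq[n-1]$ such that $\pi_i<\pi_{i+1}$ for all $i\in I$ and $|i-j|\ge 2$ for distinct $i,j\in I$; $\operatorname{MND}(\pi)$ is defined analogously with $\pi_i>\pi_{i+1}$. *)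

From mathcomp Require Import all_boot all_order all_algebra all_fingroup.
Set Implicit Arguments. Unset Strict Implicit. Unset Printing Implicit Defensive.
Import GRing.Theory.
Local Open Scope ring_scope.

(* One-line notation of a permutation s of 'I_n, values in {0,...,n-1}
   (order-isomorphic to the usual 1..n convention). *)
Definition oneline n (s : 'S_n) : seq nat := [seq val (s i) | i <- enum 'I_n].

Definition contains123 (w : seq nat) : bool :=
  [exists i : 'I_(size w), exists j : 'I_(size w), exists k : 'I_(size w),
     [&& (i < j)%N, (j < k)%N, (nth 0 w i < nth 0 w j)%N & (nth 0 w j < nth 0 w k)%N]].
Definition contains132 (w : seq nat) : bool :=
  [exists i : 'I_(size w), exists j : 'I_(size w), exists k : 'I_(size w),
     [&& (i < j)%N, (j < k)%N, (nth 0 w i < nth 0 w k)%N & (nth 0 w k < nth 0 w j)%N]].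

Definition Av123_132 n : {set 'S_n} :=
  [set s : 'S_n | ~~ contains123 (oneline s) && ~~ contains132 (oneline s)].

Definition is_asc (w : seq nat) (i : nat) : bool :=
  (i.+1 < size w)%N && (nth 0 w i < nth 0 w i.+1)%N.
Definition is_des (w : seq nat) (i : nat) : bool :=
  (i.+1 < size w)%N && (nth 0 w i.+1 < nth 0 w i)%N.

Definition asc (w : seq nat) : nat := #|[set i : 'I_(size w) | is_asc w i]|.
Definition des (w : seq nat) : nat := #|[set i : 'I_(size w) | is_des w i]|.

Definition nonadj_in (w : seq nat) (P : seq nat -> nat -> bool)
  (I : {set 'I_(size w)}) : bool :=
  [forall i in I, P w i] &&
  [forall i in I, forall j in I, (i != j) ==> ((i.+1 < j) || (j.+1 < i))%N].

Definition MNA (w : seq nat) : nat :=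
  \max_(I : {set 'I_(size w)} | nonadj_in is_asc I) #|I|.
Definition MND (w : seq nat) : nat :=
  \max_(I : {set 'I_(size w)} | nonadj_in is_des I) #|I|.

Definition gf_coef (stat : seq nat -> nat) (n : nat) : {poly int} :=
  \sum_(s in Av123_132 n) 'X ^+ stat (oneline s).

(* The formal power series sum_n a n x^n (over R) equals N(x)/D(x), where
   D has constant term 1: i.e. (sum_n a n x^n) * D(x) = N(x) in R[[x]]. *)
Definition fps_is_ratio (R : nzRingType) (a : nat -> R) (N D : {poly R}) : Prop :=
  D`_0 = 1 /\ forall m, \sum_(k < m.+1) D`_k * a (m - k)%N = N`_m.

From mathcomp Require Import all_boot all_algebra all_fingroup.
From mathcomp Require Import zify ring.
Import GRing.Theory.

(* A permutation avoids 123 and 132 exactly when every letter has at most one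
   larger letter to its right.  On the values {0, ..., n} such a word is
   n-1, n-2, ..., n-k, n followed by an arbitrary such word on {0, ..., n-k-1},
   and every such concatenation qualifies.  All four statistics are read off the
   word of ascents (or descents), whose greedy left-to-right scan computes MNA
   and MND.  Across the decomposition asc and MNA gain [k > 0], des gains
   [k - 1] plus the descent into the tail, and MND gains [k / 2] plus the MND of
   the tail behind a larger letter, a statistic that obeys a similar rule.
   Summing over the decomposition gives linear recurrences for the coefficient
   polynomials, which are exactly those encoded by the stated denominators. *)

Set Implicit Arguments.
Unset Strict Implicit.
Unset Printing Implicit Defensive.

Fixpoint greedy_nonadj (prev : bool) (b : seq bool) : nat :=
  if b is x :: b' then (x && ~~ prev) + greedy_nonadj (x && ~~ prev) b' else 0.

Fixpoint greedy_pick (p : nat -> bool) (i : nat) : bool :=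
  if i is i'.+1 then p i'.+1 && ~~ greedy_pick p i' else p 0.

Lemma greedy_nonadj_iota p a n :
  greedy_nonadj (if a is a'.+1 then greedy_pick p a' else false) (map p (iota a n)) =
  count (greedy_pick p) (iota a n).
Proof.
elim: n a => [|n IH] a //=.
have -> : p a && ~~ (if a is a'.+1 then greedy_pick p a' else false) = greedy_pick p a.
  by case: a {IH} => [|a] //=; rewrite andbT.
by rewrite (IH a.+1).
Qed.

(* Exchange argument, run on [m] and [m.+1] together: when [S] takes [m.+1] it
   skips [m], and the greedy choice takes at least one of [m], [m.+1]. *)
Lemma count_nonadj_le_greedy (S p : nat -> bool) :
  (forall i, S i -> p i) -> (forall i, S i -> ~~ S i.+1) ->
  forall m, count S (iota 0 m) <= count (greedy_pick p) (iota 0 m).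
Proof.
move=> Sp S_nonadj.
have iotaS m : iota 0 m.+1 = rcons (iota 0 m) m by rewrite -cats1 -addn1 iotaD.
suff step m : count S (iota 0 m) <= count (greedy_pick p) (iota 0 m) /\
              count S (iota 0 m.+1) <= count (greedy_pick p) (iota 0 m.+1).
  by move=> m; case: (step m).
elim: m => [|m [IH1 IH2]].
  by split=> //=; rewrite !addn0; case S0: (S 0); rewrite // Sp.
split=> //; move: IH1 IH2; rewrite !iotaS -!cats1 !count_cat /= !addn0.
case Sm1: (S m.+1) => /=.
  have -> : S m = false by apply/negbTE/negP => /S_nonadj; rewrite Sm1.
  rewrite Sp // addn0 => IH1 _; rewrite -!addnA; apply: leq_add IH1 _.
  by case: (greedy_pick p m).
by rewrite addn0 => _ IH2; apply: leq_trans IH2 (leq_addr _ _).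
Qed.

Lemma greedy_nonadj_nseq_false j b :
  greedy_nonadj false (nseq j false ++ b) = greedy_nonadj false b.
Proof. by elim: j. Qed.

Lemma greedy_nonadj_nseq_true prev j b :
  greedy_nonadj prev (nseq j true ++ false :: b) =
  (if prev then j./2 else uphalf j) + greedy_nonadj false b.
Proof.
elim: j prev => [|j IH] prev; first by case: prev.
by case: prev; rewrite /= IH //= add0n.
Qed.

Lemma card_ord_count N (q : nat -> bool) :
  #|[set i : 'I_N | q i]| = count q (iota 0 N).
Proof. by rewrite cardsE cardE /enum_mem size_filter -enumT -val_enum_ord count_map. Qed.

Lemma max_nonadj_greedy N (p : nat -> bool) :
  \max_(I : {set 'I_N} | [forall i in I, p i] &&
      [forall i in I, forall j in I, (i != j) ==> ((i.+1 < j) || (j.+1 < i))%N]) #|I|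
  = greedy_nonadj false (map p (iota 0 N)).
Proof.
rewrite (greedy_nonadj_iota p 0 N); apply/eqP; rewrite eqn_leq; apply/andP; split.
  apply/bigmax_leqP => I /andP[/forall_inP Ip /forall_inP I_nonadj].
  pose S i := if (insub i : option 'I_N) is Some j then j \in I else false.
  have -> : #|I| = count S (iota 0 N).
    rewrite -card_ord_count; apply: eq_card => i.
    by rewrite inE /S valK.
  apply: count_nonadj_le_greedy => i; rewrite /S; case: insubP => // j _ <- jI.
    exact: Ip.
  case: insubP => // j' _ j'E; apply/negP => j'I.
  have {}j'E : nat_of_ord j' = j.+1 := j'E.
  have : j != j' by apply/negP => /eqP jj'; move: j'E; rewrite -jj'; lia.
  move/implyP: (forall_inP (I_nonadj _ jI) _ j'I) => /[apply]; lia.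
apply: (@leq_trans #|[set i : 'I_N | greedy_pick p i]|); first by rewrite card_ord_count.
apply: leq_bigmax_cond; apply/andP; split.
  by apply/forall_inP => i; rewrite inE; case: (nat_of_ord i) => [|k] //= /andP[].
apply/forall_inP => i; rewrite inE => pi; apply/forall_inP => j; rewrite inE => pj.
apply/implyP => /eqP ij; have {}ij : nat_of_ord i <> j by move/val_inj.
have ji1 : nat_of_ord j <> i.+1 by move=> ji; move: pj; rewrite ji /= pi andbF.
have ij1 : nat_of_ord i <> j.+1 by move=> ij'; move: pi; rewrite ij' /= pj andbF.
lia.
Qed.

Definition adj_word (R : rel nat) (w : seq nat) : seq bool :=
  [seq (i.+1 < size w) && R (nth 0 w i) (nth 0 w i.+1) | i <- iota 0 (size w)].

Lemma asc_adj_word w : asc w = count id (adj_word ltn w).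
Proof. by rewrite /asc card_ord_count count_map. Qed.

Lemma des_adj_word w : des w = count id (adj_word gtn w).
Proof. by rewrite /des card_ord_count count_map. Qed.

Lemma MNA_adj_word w : MNA w = greedy_nonadj false (adj_word ltn w).
Proof. by rewrite /MNA /nonadj_in max_nonadj_greedy. Qed.

Lemma MND_adj_word w : MND w = greedy_nonadj false (adj_word gtn w).
Proof. by rewrite /MND /nonadj_in max_nonadj_greedy. Qed.

Lemma adj_word_cons R m s :
  adj_word R (m :: s) = (if s is y :: _ then R m y else false) :: adj_word R s.
Proof.
rewrite /adj_word /=; congr (_ :: _); first by case: s.
by rewrite -[1]addn0 iotaDl -map_comp; apply: eq_map => i /=; rewrite add1n.
Qed.

Definition block_cat (a k : nat) (s : seq nat) : seq nat := rev (iota a k) ++ (a + k) :: s.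

Lemma block_cat_neq0 a k s : block_cat a k s != [::].
Proof. by rewrite /block_cat; case: (rev _). Qed.

Lemma rev_iotaS a k : rev (iota a k.+1) = (a + k) :: rev (iota a k).
Proof. by rewrite -addn1 iotaD rev_cat. Qed.

Lemma adj_word_rev_iota R a k m s c :
  (forall i, i < k -> R (a + i).+1 (a + i) = c) ->
  adj_word R (rev (iota a k.+1) ++ m :: s) = nseq k c ++ R a m :: adj_word R (m :: s).
Proof.
elim: k => [|k IH] Rc; first by rewrite /= adj_word_cons.
rewrite rev_iotaS rev_iotaS /= adj_word_cons.
have -> : a + k :: rev (iota a k) ++ m :: s = rev (iota a k.+1) ++ m :: s by rewrite rev_iotaS.
by rewrite IH => [|i ik]; [rewrite addnS Rc | apply: Rc; lia].
Qed.

(* [MND_below w] is the MND of [m :: w] for any [m] larger than every letter of [w]. *)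
Definition MND_below (w : seq nat) : nat :=
  greedy_nonadj false ((w != [::]) :: adj_word gtn w).

Lemma ltn_word_block_cat a k s : all (fun y => y < a) s ->
  adj_word ltn (block_cat a k s) =
  (if k is k'.+1 then nseq k' false ++ [:: true] else [::]) ++ false :: adj_word ltn s.
Proof.
move=> s_lt; have top k' : (if s is y :: _ then ltn (a + k') y else false) = false.
  by case: s s_lt => //= y s' /andP[ya _]; apply/negbTE; rewrite -leqNgt; lia.
case: k => [|k]; first by rewrite /block_cat /= adj_word_cons top.
rewrite /block_cat (@adj_word_rev_iota _ _ _ _ _ false) => [|i _]; last first.
  by apply/negbTE; rewrite -leqNgt; lia.
by rewrite adj_word_cons top -catA /= addnS ltnS leq_addr.
Qed.

Lemma gtn_word_block_cat a k s : all (fun y => y < a) s ->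
  adj_word gtn (block_cat a k s) =
  (if k is k'.+1 then nseq k' true ++ [:: false] else [::]) ++ (s != [::]) :: adj_word gtn s.
Proof.
move=> s_lt; have top k' : (if s is y :: _ then gtn (a + k') y else false) = (s != [::]).
  by case: s s_lt => //= y s' /andP[ya _]; rewrite /gtn /=; lia.
case: k => [|k]; first by rewrite /block_cat /= adj_word_cons top.
rewrite /block_cat (@adj_word_rev_iota _ _ _ _ _ true); last by move=> i _ /=; lia.
by rewrite adj_word_cons top -catA /= ltnNge leq_addr.
Qed.

Lemma asc_block_cat a k s : all (fun y => y < a) s -> asc (block_cat a k s) = (0 < k) + asc s.
Proof.
move=> s_lt; rewrite !asc_adj_word (ltn_word_block_cat k s_lt).
by case: k => [|k] //=; rewrite !count_cat count_nseq /=; lia.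
Qed.

Lemma des_block_cat a k s : all (fun y => y < a) s ->
  des (block_cat a k s) = k.-1 + (s != [::]) + des s.
Proof.
move=> s_lt; rewrite !des_adj_word (gtn_word_block_cat k s_lt).
by case: k => [|k] //=; rewrite !count_cat count_nseq /=; lia.
Qed.

Lemma MNA_block_cat a k s : all (fun y => y < a) s -> MNA (block_cat a k s) = (0 < k) + MNA s.
Proof.
move=> s_lt; rewrite !MNA_adj_word (ltn_word_block_cat k s_lt); case: k => [|k] //=.
by rewrite -catA greedy_nonadj_nseq_false.
Qed.

Lemma MND_block_cat a k s : all (fun y => y < a) s ->
  MND (block_cat a k s) = k./2 + MND_below s.
Proof.
move=> s_lt; rewrite !MND_adj_word (gtn_word_block_cat k s_lt); case: k => [|k] //=.
by rewrite -catA /= greedy_nonadj_nseq_true.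
Qed.

Lemma MND_below_block_cat a k s : all (fun y => y < a) s ->
  MND_below (block_cat a k s) = if k == 0 then (MND s).+1 else uphalf k + MND_below s.
Proof.
move=> s_lt; rewrite /MND_below block_cat_neq0 (gtn_word_block_cat k s_lt) MND_adj_word.
case: k => [|k] /=.
  by case: (s != [::]).
by rewrite -catA /= greedy_nonadj_nseq_true /= !andbT; lia.
Qed.

Fixpoint av_words_fuel (fuel n : nat) : seq (seq nat) :=
  if fuel is f.+1 then
    if n is n'.+1 then
      [seq block_cat (n' - k) k s | k <- iota 0 n, s <- av_words_fuel f (n' - k)]
    else [:: [::]]
  else [:: [::]].

Definition av_words n := av_words_fuel n n.

Lemma av_words_fuel_stable f f' n :
  n <= f -> n <= f' -> av_words_fuel f n = av_words_fuel f' n.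
Proof.
elim: f f' n => [|f IH] [|f'] [|n] // nf nf'; cbn [av_words_fuel].
by apply: eq_allpairsr => k; apply: IH; lia.
Qed.

Lemma av_words0 : av_words 0 = [:: [::]]. Proof. by []. Qed.

Lemma av_words_succ n :
  av_words n.+1 = [seq block_cat (n - k) k s | k <- iota 0 n.+1, s <- av_words (n - k)].
Proof.
rewrite {1}/av_words; cbn [av_words_fuel].
by apply: eq_allpairsr => k; apply: av_words_fuel_stable; lia.
Qed.

Lemma block_cat_top n k s : k <= n -> block_cat (n - k) k s = rev (iota (n - k) k) ++ n :: s.
Proof. by move=> kn; rewrite /block_cat subnK. Qed.

Lemma av_wordsP n w : w \in av_words n.+1 ->
  exists k s, [/\ k <= n, s \in av_words (n - k) & w = block_cat (n - k) k s].
Proof.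
rewrite av_words_succ => /allpairsPdep[k [s [+ sin ->]]].
by rewrite mem_iota ltnS => kn; exists k, s.
Qed.

Lemma av_words_perm n w : w \in av_words n -> perm_eq w (iota 0 n).
Proof.
elim/ltn_ind: n w => [[|n]] IH w; first by rewrite av_words0 inE => /eqP ->.
move=> /av_wordsP[k [s [kn sin ->]]]; rewrite block_cat_top //.
have Ps := IH (n - k) (leq_ltn_trans (leq_subr k n) (ltnSn n)) s sin.
have -> : iota 0 n.+1 = (iota 0 (n - k) ++ iota (n - k) k) ++ [:: n].
  by rewrite -iotaD subnK // -addn1 iotaD.
rewrite perm_sym perm_catC /= perm_sym -cat1s perm_catCA /= perm_cons perm_catC.
by apply: perm_cat => //; rewrite perm_rev.
Qed.

Lemma av_words_lt n w : w \in av_words n -> all (fun y => y < n) w.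
Proof.
move=> /av_words_perm P; rewrite (perm_all _ P); apply/allP => y; rewrite mem_iota; lia.
Qed.

Lemma av_words_size n w : w \in av_words n -> size w = n.
Proof. by move=> /av_words_perm /perm_size ->; rewrite size_iota. Qed.

Lemma index_block_cat n k s : k <= n -> index n (block_cat (n - k) k s) = k.
Proof.
move=> kn; rewrite block_cat_top // index_cat mem_rev mem_iota subnK // ltnn andbF.
by rewrite size_rev size_iota /= eqxx addn0.
Qed.

Lemma av_words_uniq n : uniq (av_words n).
Proof.
elim/ltn_ind: n => [[|n]] IH //; rewrite av_words_succ; apply: allpairs_uniq_dep.
- exact: iota_uniq.
- by move=> k _; apply: IH; rewrite ltnS leq_subr.
move=> [k1 s1] [k2 s2] /allpairsPdep[k1' [_ [k1in _ [Ek1 _]]]]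
  /allpairsPdep[k2' [_ [k2in _ [Ek2 _]]]] /= E; subst k1' k2'.
move: k1in k2in; rewrite !mem_iota !ltnS => /andP[_ k1n] /andP[_ k2n].
have Ek : k1 = k2 by rewrite -(index_block_cat s1 k1n) E index_block_cat.
move: E; subst k2; rewrite /block_cat => /eqP; rewrite eqseq_cat // => /andP[_ /eqP[->]].
by [].
Qed.

Fixpoint avoids123_132 (w : seq nat) : bool :=
  if w is a :: w' then (count (fun b => a < b) w' <= 1) && avoids123_132 w' else true.

Lemma avoids123_132_catr u v : avoids123_132 (u ++ v) -> avoids123_132 v.
Proof. by elim: u => //= x u IH /andP[_ /IH]. Qed.

Lemma count_gtn_all m s : all (fun y => y < m) s -> count (fun b => m < b) s = 0.
Proof. by elim: s => //= y s IH /andP[ym /IH ->]; rewrite ltnNge ltnW. Qed.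

Lemma gtn_trans : transitive gtn.
Proof. exact: rev_trans ltn_trans. Qed.

Lemma avoids123_132_cat_top p m s :
  sorted gtn p -> all (fun y => y < m) p -> {in p, forall x, all (fun y => y < x) s} ->
  all (fun y => y < m) s -> avoids123_132 s -> avoids123_132 (p ++ m :: s).
Proof.
elim: p => [|x p IH] /=; first by move=> _ _ _ s_lt ->; rewrite count_gtn_all.
move=> p_sorted /andP[xm p_lt] p_above s_lt s_av.
rewrite IH ?(path_sorted p_sorted) //; last by move=> y yp; apply: p_above; rewrite inE yp orbT.
have x_above_p : all (gtn x) p by move: p_sorted; rewrite (path_sortedE gtn_trans) => /andP[].
rewrite count_cat /= xm count_gtn_all ?count_gtn_all //.
by apply: p_above; rewrite inE eqxx.
Qed.

Lemma av_words_avoid n w : w \in av_words n -> avoids123_132 w.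
Proof.
elim/ltn_ind: n w => [[|n]] IH w; first by rewrite av_words0 inE => /eqP ->.
move=> /av_wordsP[k [s [kn sin ->]]]; rewrite block_cat_top //.
have s_lt := av_words_lt sin.
apply: avoids123_132_cat_top.
- by rewrite rev_sorted; apply: iota_ltn_sorted.
- by apply/allP => x; rewrite mem_rev mem_iota; lia.
- move=> x; rewrite mem_rev mem_iota => /andP[xk _]; apply/allP => y ys.
  by have := allP s_lt y ys; lia.
- by apply/allP => y ys; have := allP s_lt y ys; lia.
- by apply: (IH (n - k)) => //; lia.
Qed.

Lemma count_gt1_mem (a : pred nat) s y z : uniq s -> y \in s -> z \in s -> y != z ->
  a y -> a z -> 1 < count a s.
Proof.
move=> s_uniq ys zs yz ay az.
rewrite (seq.permP (perm_to_rem ys)) /= ay add1n ltnS -has_count.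
by apply/hasP; exists z => //; rewrite (mem_rem_uniq _ s_uniq) inE zs andbT eq_sym.
Qed.

Lemma avoids123_132_split p m s :
  avoids123_132 (p ++ m :: s) -> uniq (p ++ m :: s) -> all (fun y => y < m) (p ++ s) ->
  sorted gtn p /\ {in p, forall x, all (fun y => y < x) s}.
Proof.
elim: p => [|x p IH] //= /andP[x_cnt w_av] /andP[xw w_uniq] /andP[xm w_lt].
have [p_sorted p_above] := IH w_av w_uniq w_lt.
have x_top y : y \in p ++ s -> y < x.
  move=> yps; case: (ltngtP y x) => // [xy|yx]; last first.
    by move: xw; rewrite -yx mem_cat inE; move: yps; rewrite mem_cat => /orP[->|->]; rewrite ?orbT.
  suff : 1 < count (fun b => x < b) (p ++ m :: s) by rewrite ltnNge x_cnt.
  apply: (@count_gt1_mem _ _ y m w_uniq) => //.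
  - by move: yps; rewrite !mem_cat inE => /orP[->|->]; rewrite ?orbT.
  - by rewrite mem_cat inE eqxx orbT.
  - by have := allP w_lt y yps; rewrite neq_ltn => ->.
split.
  rewrite (path_sortedE gtn_trans) p_sorted andbT; apply/allP => y yp.
  by rewrite /gtn /= x_top // mem_cat yp.
move=> x'; rewrite inE => /orP[/eqP ->|/p_above //].
by apply/allP => y ys; rewrite x_top // mem_cat ys orbT.
Qed.

Lemma perm_iota_cat_above p s n :
  perm_eq (p ++ s) (iota 0 n) -> {in p & s, forall x y, y < x} ->
  perm_eq s (iota 0 (size s)) /\ perm_eq p (iota (size s) (size p)).
Proof.
move=> P above.
have ps_uniq : uniq (p ++ s) by rewrite (perm_uniq P) iota_uniq.
have ps_size : size p + size s = n by rewrite -size_cat (perm_size P) size_iota.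
have ps_lt x : x \in p ++ s -> x < n by rewrite (perm_mem P) mem_iota.
move: ps_uniq; rewrite cat_uniq => /and3P[p_uniq _ s_uniq].
have Ps : perm_eq s (iota 0 (size s)).
  apply: uniq_perm => //; first exact: iota_uniq.
  apply: (uniq_min_size s_uniq _ _).2; last by rewrite size_iota.
  move=> y ys; have p_sub : {subset p <= iota y.+1 (n - y.+1)}.
    move=> x xp; have := ps_lt x; rewrite mem_cat xp mem_iota => /(_ isT).
    by have := above x y xp ys; lia.
  have := uniq_leq_size p_uniq p_sub; rewrite size_iota mem_iota.
  by have := ps_lt y; rewrite mem_cat ys orbT => /(_ isT); lia.
split=> //; rewrite -(perm_cat2r s) (perm_trans P) // -ps_size addnC iotaD.
by rewrite perm_catC perm_cat2l perm_sym.
Qed.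

Lemma avoids123_132_decomp n w : perm_eq w (iota 0 n.+1) -> avoids123_132 w ->
  exists k s, [/\ k <= n, w = block_cat (n - k) k s,
                  perm_eq s (iota 0 (n - k)) & avoids123_132 s].
Proof.
move=> P w_av.
have w_uniq : uniq w by rewrite (perm_uniq P) iota_uniq.
have nw : n \in w by rewrite (perm_mem P) mem_iota add0n ltnSn.
have [p [s Ew]] : exists p s, w = p ++ n :: s.
  exists (take (index n w) w), (drop (index n w).+1 w).
  by rewrite -{2}(nth_index 0 nw) -drop_nth ?index_mem // cat_take_drop.
have P' : perm_eq (p ++ s) (iota 0 n).
  have Pw : perm_eq w (n :: p ++ s) by rewrite Ew -cat1s perm_catCA.
  have Pi : perm_eq (iota 0 n.+1) (n :: iota 0 n) by rewrite -addn1 iotaD cats1 perm_rcons.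
  by rewrite -(perm_cons n); apply: perm_trans _ (perm_trans P Pi); rewrite perm_sym.
have ps_lt : all (fun y => y < n) (p ++ s).
  by rewrite (perm_all _ P'); apply/allP => y; rewrite mem_iota.
have [p_sorted p_above] : sorted gtn p /\ {in p, forall x, all (fun y => y < x) s}.
  by apply: avoids123_132_split ps_lt; rewrite -Ew.
have [Ps Pp] := perm_iota_cat_above P' (fun x y xp ys => allP (p_above x xp) y ys).
have ps_size : size p + size s = n by rewrite -size_cat (perm_size P') size_iota.
exists (size p), s; split.
- by rewrite -ps_size leq_addr.
- have -> : n - size p = size s by rewrite -ps_size addKn.
  rewrite Ew /block_cat -ps_size addnC; congr (_ ++ _ :: _).
  apply: (sorted_eq gtn_trans) => //.
  + by move=> x y /andP[]; rewrite /gtn /=; lia.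
  + by rewrite rev_sorted; apply: iota_ltn_sorted.
  + by rewrite perm_sym perm_rev perm_sym.
- by rewrite -ps_size addKn.
- by move: w_av; rewrite Ew => /avoids123_132_catr /andP[].
Qed.

Lemma av_words_complete n w : perm_eq w (iota 0 n) -> avoids123_132 w -> w \in av_words n.
Proof.
elim/ltn_ind: n w => [[|n]] IH w P w_av.
  by move: (perm_size P); rewrite size_iota => /size0nil ->.
have [k [s [kn -> Ps s_av]]] := avoids123_132_decomp P w_av.
rewrite av_words_succ; apply/allpairsPdep; exists k, s; split => //.
  by rewrite mem_iota.
by apply: IH => //; lia.
Qed.

Definition two_larger_after (w : seq nat) : Prop := exists i j k,
  [/\ i < j, j < k, k < size w, nth 0 w i < nth 0 w j & nth 0 w i < nth 0 w k].

Lemma count_gt1P (a : pred nat) s :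
  reflect (exists j k, [/\ j < k, k < size s, a (nth 0 s j) & a (nth 0 s k)]) (1 < count a s).
Proof.
apply: (iffP idP).
  elim: s => [|x s IH] //=; case ax: (a x) => /= cnt.
    have /hasP[y ys ay] : has a s by rewrite has_count -ltnS -add1n.
    by exists 0, (index y s).+1; split; rewrite //= ?nth_index ?ltnS ?index_mem.
  by have [j [k [jk ks aj ak]]] := IH cnt; exists j.+1, k.+1.
move=> [j [k []]]; elim: s j k => [|x s IH] [|j] [|k] //= jk ks aj ak.
  have : has a s by apply/hasP; exists (nth 0 s k); rewrite ?mem_nth.
  by rewrite has_count aj; case: (count a s).
by apply: leq_trans (IH j k jk ks aj ak) (leq_addl _ _).
Qed.

Lemma two_larger_after_cons a w : two_larger_after (a :: w) <->
  (exists j k, [/\ j < k, k < size w, a < nth 0 w j & a < nth 0 w k]) \/ two_larger_after w.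
Proof.
split.
  move=> [[|i] [[|j] [[|k] [//= ij jk ks wj wk]]]]; first by left; exists j, k.
  by right; exists i, j, k.
move=> [[j [k [jk ks wj wk]]] | [i [j [k [ij jk ks wj wk]]]]].
  by exists 0, j.+1, k.+1.
by exists i.+1, j.+1, k.+1.
Qed.

Lemma avoids123_132P w : ~~ avoids123_132 w <-> two_larger_after w.
Proof.
elim: w => [|a w IH] /=; first by split=> // [[i [j [k [_ _ ]]]]].
rewrite negb_and -ltnNge two_larger_after_cons -IH.
split; first by case/orP=> [/count_gt1P|] H; [left|right].
by case=> [/count_gt1P|] ->; rewrite ?orbT.
Qed.

Lemma contains123_132P w : uniq w -> (contains123 w || contains132 w) <-> two_larger_after w.
Proof.
move=> w_uniq; split.
  case/orP=> /existsP[i /existsP[j /existsP[k /and4P[ij jk w1 w2]]]];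
    exists i, j, k; split=> //; by [| apply: ltn_ord | apply: ltn_trans w2 | apply: ltn_trans w1].
move=> [i [j [k [ij jk ks wj wk]]]].
have js : j < size w by apply: ltn_trans ks.
have iw : i < size w by apply: ltn_trans js.
have : nth 0 w j != nth 0 w k by rewrite nth_uniq // neq_ltn jk.
rewrite neq_ltn => /orP[w_jk|w_kj]; apply/orP; [left|right];
  by apply/existsP; exists (Ordinal iw); apply/existsP; exists (Ordinal js);
     apply/existsP; exists (Ordinal ks); apply/and4P.
Qed.

Lemma avoids123_132E w : uniq w -> ~~ contains123 w && ~~ contains132 w = avoids123_132 w.
Proof.
move=> w_uniq; rewrite -negb_or; apply/idP/idP => [|w_av].
  by apply: contraR => /avoids123_132P /(contains123_132P w_uniq) ->.
by apply/negP => /(contains123_132P w_uniq) /avoids123_132P; rewrite w_av.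
Qed.

Lemma oneline_inj n : injective (@oneline n).
Proof.
move=> s1 s2 /eq_in_map E; apply/permP => i; apply: val_inj; apply: E.
by rewrite mem_enum.
Qed.

Lemma oneline_perm n (s : 'S_n) : perm_eq (oneline s) (iota 0 n).
Proof.
have s_uniq : uniq (oneline s).
  by rewrite map_inj_uniq ?enum_uniq // => i j /val_inj /perm_inj.
apply: uniq_perm => //; first exact: iota_uniq.
apply: (uniq_min_size s_uniq _ _).2; last by rewrite size_iota size_map size_enum_ord.
by move=> y /mapP[i _ ->]; rewrite mem_iota /= add0n ltn_ord.
Qed.

Lemma oneline_surj n w : perm_eq w (iota 0 n) -> exists s : 'S_n, oneline s = w.
Proof.
move=> P.
have w_uniq : uniq w by rewrite (perm_uniq P) iota_uniq.
have w_size : size w = n by rewrite (perm_size P) size_iota.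
have w_lt (i : 'I_n) : nth 0 w i < n.
  by rewrite -[_ < n]andTb -[true]/(0 <= nth 0 w i) -mem_iota -(perm_mem P) mem_nth ?w_size.
pose f i := Ordinal (w_lt i).
have f_inj : injective f.
  move=> i j /(congr1 val) /= /eqP; rewrite nth_uniq ?w_size // => /eqP ij.
  exact: val_inj.
exists (perm f_inj); rewrite /oneline -[RHS](mkseq_nth 0) w_size /mkseq -val_enum_ord -map_comp.
by apply: eq_map => i; rewrite /= permE.
Qed.

Lemma sum_Av123_132 (R : nmodType) n (F : seq nat -> R) :
  (\sum_(s in Av123_132 n) F (oneline s) = \sum_(w <- av_words n) F w)%R.
Proof.
rewrite -big_enum /= -(big_map (@oneline n) xpredT F); apply: perm_big.
apply: uniq_perm; [by rewrite map_inj_uniq ?enum_uniq //; apply: oneline_inj|exact: av_words_uniq|].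
move=> w; apply/mapP/idP => [[s + ->]|w_in].
  rewrite mem_enum inE avoids123_132E ?(perm_uniq (oneline_perm s)) ?iota_uniq // => s_av.
  exact: av_words_complete (oneline_perm s) s_av.
have P := av_words_perm w_in; have [s Es] := oneline_surj P.
exists s => //; rewrite mem_enum inE Es avoids123_132E ?(perm_uniq P) ?iota_uniq //.
exact: av_words_avoid w_in.
Qed.

Local Open Scope ring_scope.

Lemma coef_cubic (R : nzRingType) (c0 c1 c2 c3 : R) k :
  (c0%:P + c1%:P * 'X + c2%:P * 'X ^+ 2 + c3%:P * 'X ^+ 3)`_k = nth 0 [:: c0; c1; c2; c3] k.
Proof.
rewrite !coefD !coefCM coefC coefX !coefXn.
by case: k => [|[|[|[|k]]]] /=; rewrite ?mulr0 ?mulr1 ?addr0 ?add0r ?nth_nil.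
Qed.

Lemma fps_is_ratio_cubic (R : nzRingType) (a : nat -> R) (N D : {poly R})
    (d1 d2 d3 n0 n1 n2 n3 : R) :
  N = n0%:P + n1%:P * 'X + n2%:P * 'X ^+ 2 + n3%:P * 'X ^+ 3 ->
  D = 1%:P + d1%:P * 'X + d2%:P * 'X ^+ 2 + d3%:P * 'X ^+ 3 ->
  a 0 = n0 -> a 1 + d1 * a 0 = n1 -> a 2 + d1 * a 1 + d2 * a 0 = n2 ->
  (forall m, a m.+3 + d1 * a m.+2 + d2 * a m.+1 + d3 * a m = if m == 0%N then n3 else 0) ->
  fps_is_ratio a N D.
Proof.
move=> -> -> a0 a1 a2 a_rec; split; first by rewrite coef_cubic.
case=> [|[|[|m]]].
- by rewrite big_ord1 !coef_cubic /= mul1r.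
- by rewrite !big_ord_recl big_ord0 !coef_cubic /= mul1r addr0.
- by rewrite !big_ord_recl big_ord0 !coef_cubic /= mul1r addr0 addrA.
rewrite !big_ord_recl big1 => [|i _]; last by rewrite coef_cubic /= ?nth_nil mul0r.
rewrite !coef_cubic /= mul1r addr0 /bump /= !subSS !subn0 !addrA a_rec.
by case: m => [|m] /=; rewrite ?nth_nil.
Qed.

Definition av_gf (st : seq nat -> nat) (n : nat) : {poly int} :=
  \sum_(w <- av_words n) 'X ^+ st w.

Lemma gf_coef_av_gf st n : gf_coef st n = av_gf st n.
Proof. exact: (sum_Av123_132 n (fun w => 'X ^+ st w)). Qed.

Lemma av_gf0 st : av_gf st 0 = 'X ^+ st [::].
Proof. by rewrite /av_gf av_words0 big_seq1. Qed.

Lemma av_gf_succ (st : seq nat -> nat) (f : nat -> seq nat -> nat) n :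
  (forall a k s, all (fun y => (y < a)%N) s -> st (block_cat a k s) = f k s) ->
  av_gf st n.+1 = \sum_(k < n.+1) \sum_(s <- av_words (n - k)) 'X ^+ f k s.
Proof.
move=> st_block; rewrite /av_gf av_words_succ big_allpairs_dep -/(index_iota 0 n.+1) big_mkord.
apply: eq_bigr => k _; apply: eq_big_seq => s s_in.
by rewrite st_block // (av_words_lt s_in).
Qed.

Lemma av_gf_succ_add (st h : seq nat -> nat) (g : nat -> nat) n :
  (forall a k s, all (fun y => (y < a)%N) s -> st (block_cat a k s) = (g k + h s)%N) ->
  av_gf st n.+1 = \sum_(k < n.+1) 'X ^+ g k * av_gf h (n - k).
Proof.
move/av_gf_succ->; apply: eq_bigr => k _; rewrite big_distrr.
by apply: eq_bigr => s _; rewrite exprD.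
Qed.

Section AscentLike.

Variable st : seq nat -> nat.
Hypothesis st_block_cat :
  forall a k s, all (fun y => (y < a)%N) s -> st (block_cat a k s) = ((0 < k)%N + st s)%N.
Hypothesis st_nil : st [::] = 0%N.

Lemma av_gf_ascent_like n : av_gf st n.+1 = av_gf st n + 'X * \sum_(j < n) av_gf st j.
Proof.
rewrite (av_gf_succ_add _ st_block_cat) big_ord_recl subn0 expr0 mul1r; congr (_ + _).
rewrite -(big_mkord xpredT (av_gf st)) big_rev_mkord subn0 big_distrr.
by apply: eq_bigr => i _; rewrite expr1.
Qed.

Lemma ascent_like_ratio :
  fps_is_ratio (gf_coef st) (1 - 'X) (1 - 2%:R * 'X + 'X ^+ 2 - ('X : {poly int})%:P * 'X ^+ 2).
Proof.
have a0 : av_gf st 0 = 1 by rewrite av_gf0 st_nil.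
have a1 : av_gf st 1 = 1 by rewrite av_gf_ascent_like big_ord0 mulr0 addr0 a0.
have a2 : av_gf st 2 = 1 + 'X by rewrite av_gf_ascent_like big_ord1 a1 a0 mulr1.
apply: (@fps_is_ratio_cubic _ _ _ _ (- 2%:R) (1 - 'X) 0 1 (-1) 0 0); rewrite ?gf_coef_av_gf.
- by ring.
- by ring.
- by rewrite a0.
- by rewrite a1 a0; ring.
- by rewrite a2 a1 a0; ring.
move=> m; rewrite !gf_coef_av_gf (av_gf_ascent_like m.+2) big_ord_recr /=.
by rewrite (av_gf_ascent_like m.+1) if_same; ring.
Qed.

End AscentLike.

Lemma av_gf_shift st j : st [::] = 0%N ->
  av_gf (fun s => ((s != [::]) + st s)%N) j = if j is 0 then 1 else 'X * av_gf st j.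
Proof.
move=> st_nil; case: j => [|j]; first by rewrite av_gf0 st_nil.
rewrite /av_gf big_distrr; apply: eq_big_seq => s s_in.
by have := av_words_size s_in; case: s {s_in} => // x s _; rewrite exprS.
Qed.

Lemma av_gf_des_rec n :
  av_gf des n.+2 = 2%:R * 'X * av_gf des n.+1 + (1 - 'X) * (if n is 0 then 1 else 'X * av_gf des n).
Proof.
pose E := av_gf (fun s => ((s != [::]) + des s)%N).
have E_shift j : E j = if j is 0 then 1 else 'X * av_gf des j.
  by apply: av_gf_shift; rewrite des_adj_word.
have des_sum j : av_gf des j.+1 = \sum_(k < j.+1) 'X ^+ k.-1 * E (j - k)%N.
  by apply: av_gf_succ_add => a k s s_lt; rewrite des_block_cat // addnA.
have -> : av_gf des n.+2 = 'X * av_gf des n.+1 + E n.+1 + E n - 'X * E n.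
  rewrite (des_sum n.+1) (des_sum n) big_distrr !big_ord_recl /= !subn0 subSS expr0 !mul1r.
  under [in RHS]eq_bigr => i _ do rewrite mulrA -exprS.
  under eq_bigr => i _ do rewrite /bump /= !add1n subSS.
  by rewrite subn0; ring.
by rewrite (E_shift n.+1) (E_shift n); case: n => [|n]; ring.
Qed.

Lemma des_ratio :
  let t : {poly {poly int}} := ('X : {poly int})%:P in
  fps_is_ratio (gf_coef des)
    (1 + 'X - 2%:R * t * 'X + 'X ^+ 2 - 2%:R * t * 'X ^+ 2 + t ^+ 2 * 'X ^+ 2)
    (1 - 2%:R * t * 'X - t * 'X ^+ 2 + t ^+ 2 * 'X ^+ 2).
Proof.
have a0 : av_gf des 0 = 1 by rewrite av_gf0 des_adj_word.
have a1 : av_gf des 1 = 1 by rewrite /av_gf big_seq1 des_adj_word.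
have a2 : av_gf des 2 = 1 + 'X by rewrite av_gf_des_rec a1; ring.
apply: (@fps_is_ratio_cubic _ _ _ _ (- (2%:R * 'X)) ('X ^+ 2 - 'X) 0
  1 (1 - 2%:R * 'X) (1 - 2%:R * 'X + 'X ^+ 2) 0); rewrite ?gf_coef_av_gf.
- by ring.
- by ring.
- by rewrite a0.
- by rewrite a1 a0; ring.
- by rewrite a2 a1 a0; ring.
by move=> m; rewrite !gf_coef_av_gf (av_gf_des_rec m.+1) if_same /=; ring.
Qed.

Lemma av_gf_MND n : av_gf MND n.+1 = \sum_(k < n.+1) 'X ^+ k./2 * av_gf MND_below (n - k).
Proof. exact: av_gf_succ_add MND_block_cat. Qed.

Lemma av_gf_MND_below n :
  av_gf MND_below n.+1 =
  'X * av_gf MND n + \sum_(i < n) 'X ^+ uphalf i.+1 * av_gf MND_below (n - i.+1).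
Proof.
rewrite (av_gf_succ _ (f := fun k s => if k == 0%N then (MND s).+1 else (uphalf k + MND_below s)%N))
  => [|a k s]; last exact: MND_below_block_cat.
rewrite big_ord_recl subn0 /av_gf big_distrr; congr (_ + _).
  by apply: eq_bigr => s _; rewrite exprS.
apply: eq_bigr => i _; rewrite big_distrr; apply: eq_bigr => s _.
by rewrite /bump /= exprD.
Qed.

(* For [n > 0] the block [k = 0] and the blocks [k > 0] each contribute
   ['X * av_gf MND n], the latter because [uphalf k.+1 = (k./2).+1]. *)
Lemma av_gf_MND_below_succ n :
  av_gf MND_below n.+1 = (if n is 0 then 1 else 2%:R) * 'X * av_gf MND n.
Proof.
case: n => [|n]; first by rewrite av_gf_MND_below big_ord0 addr0 mul1r.
rewrite av_gf_MND_below.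
have -> : \sum_(i < n.+1) 'X ^+ uphalf i.+1 * av_gf MND_below (n.+1 - i.+1) = 'X * av_gf MND n.+1.
  by rewrite (av_gf_MND n) big_distrr; apply: eq_bigr => i _; rewrite subSS /= exprS mulrA.
by ring.
Qed.

Lemma av_gf_MND_rec n :
  av_gf MND n.+3 = av_gf MND_below n.+2 + av_gf MND_below n.+1 + 'X * av_gf MND n.+1.
Proof.
rewrite (av_gf_MND n.+2) 2!big_ord_recl (av_gf_MND n) [in RHS]big_distrr addrA.
congr (_ + _ + _).
- by rewrite subn0 expr0 mul1r.
- by rewrite /bump /= subSS subn0 expr0 mul1r.
by apply: eq_bigr => i _; rewrite /bump /= !subSS exprS -mulrA.
Qed.

Lemma MND_ratio :
  let t : {poly {poly int}} := ('X : {poly int})%:P in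
  fps_is_ratio (gf_coef MND)
    (1 + 'X + 'X ^+ 2 - 2%:R * 'X ^+ 2 * t - 'X ^+ 3 * t)
    (1 - 3%:R * 'X ^+ 2 * t - 2%:R * 'X ^+ 3 * t).
Proof.
have a0 : av_gf MND 0 = 1 by rewrite av_gf0 MND_adj_word.
have b0 : av_gf MND_below 0 = 1 by rewrite av_gf0.
have a1 : av_gf MND 1 = 1 by rewrite av_gf_MND big_ord1 b0 mulr1.
have a2 : av_gf MND 2 = 1 + 'X.
  by rewrite av_gf_MND !big_ord_recl big_ord0 /= av_gf_MND_below_succ b0 a0; ring.
apply: (@fps_is_ratio_cubic _ _ _ _ 0 (- (3%:R * 'X)) (- (2%:R * 'X)) 1 1 (1 - 2%:R * 'X) (- 'X));
  rewrite ?gf_coef_av_gf.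
- by ring.
- by ring.
- by rewrite a0.
- by rewrite a1 a0; ring.
- by rewrite a2 a0; ring.
move=> m; rewrite !gf_coef_av_gf av_gf_MND_rec !av_gf_MND_below_succ.
by case: m => [|m] /=; rewrite ?a0; ring.
Qed.

Theorem corollary1 :
  let t : {poly {poly int}} := ('X : {poly int})%:P in
  let x : {poly {poly int}} := 'X in
  [/\ fps_is_ratio (gf_coef asc) (1 - x) (1 - 2%:R * x + x ^+ 2 - t * x ^+ 2),
      fps_is_ratio (gf_coef des)
        (1 + x - 2%:R * t * x + x ^+ 2 - 2%:R * t * x ^+ 2 + t ^+ 2 * x ^+ 2)
        (1 - 2%:R * t * x - t * x ^+ 2 + t ^+ 2 * x ^+ 2),
      fps_is_ratio (gf_coef MNA) (1 - x) (1 - 2%:R * x + x ^+ 2 - x ^+ 2 * t)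
    & fps_is_ratio (gf_coef MND)
        (1 + x + x ^+ 2 - 2%:R * x ^+ 2 * t - x ^+ 3 * t)
        (1 - 3%:R * x ^+ 2 * t - 2%:R * x ^+ 3 * t)].
Proof.
move=> t x; split.
- by apply: ascent_like_ratio; [exact: asc_block_cat | rewrite asc_adj_word].
- exact: des_ratio.
- rewrite [x ^+ 2 * t]mulrC.
  by apply: ascent_like_ratio; [exact: MNA_block_cat | rewrite MNA_adj_word].
- exact: MND_ratio.
Qed.
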